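(* Let $M=(S,\mathrm{Act},P)$ be an MDP, $T\subseteq S$, $\mathrm{opt}\in\{\min,\max\}$, and let $r_1,r_2\in\mathbb{N}_\infty^S$ with $r_1\le r_2$ (pointwise). Then $\tilde D^{\mathrm{opt}}(r_1)\le\tilde D^{\mathrm{opt}}(r_2)$.
   Context: An MDP is a tuple $M=(S,\mathrm{Act},P)$ with $S$ finite, $\mathrm{Act}$ finite, $P\colon S\times\mathrm{Act}\times S\to[0,1]$ with $\sum_{s'}P(s,a,s')\in\{0,1\}$; $\mathrm{Act}(s)=\{a\mid\sum_{s'}P(s,a,s')=1\}$ is nonempty for all $s$; $\mathrm{Post}(s,a)=\{s'\mid P(s,a,s')>0\}$. $\mathbb{N}_\infty=\mathbb{N}\cup\{\infty\}$ with $\infty+1=\infty$. The complementary distance operator $\tilde D^{\mathrm{opt}}\colon\mathbb{N}_\infty^S\to\mathbb{N}_\infty^S$ is $\tilde D^{\mathrm{opt}}(r)(s)=\infty$ for $s\in T$ and $\mathrm{opt}_{a\in\mathrm{Act}(s)}\big(\min_{s'\in\mathrm{Post}(s,a)}r(s')+[\exists u,v\in\mathrm{Post}(s,a)\colon r(u)\ne r(v)]\big)$ for $s\notin T$, where $[\varphi]$ is $1$ if $\varphi$ holds and $0$ otherwise. *)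

From HB Require Import structures.
From mathcomp Require Import all_boot all_order all_algebra.
Set Implicit Arguments. Unset Strict Implicit. Unset Printing Implicit Defensive.
Import Order.TTheory GRing.Theory Num.Theory.

(* N_infty = N ∪ {∞}, encoded as option nat with None = ∞. *)
Definition ninf := option nat.
Definition ninf_inf : ninf := None.

Definition ninf_le (x y : ninf) : bool :=
  match x, y with
  | _, None => true
  | None, Some _ => false
  | Some m, Some n => (m <= n)%N
  end.

Definition ninf_min (x y : ninf) : ninf :=
  match x, y with
  | None, _ => y
  | _, None => x
  | Some m, Some n => Some (minn m n)
  end.

Definition ninf_max (x y : ninf) : ninf :=
  match x, y with
  | None, _ => None
  | _, None => None
  | Some m, Some n => Some (maxn m n)
  end.

Definition ninf_addn (x : ninf) (k : nat) : ninf :=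
  match x with None => None | Some n => Some (n + k)%N end.

Inductive opt := Omin | Omax.
Definition opt_op (o : opt) : ninf -> ninf -> ninf :=
  match o with Omin => ninf_min | Omax => ninf_max end.
(* neutral elements (only used for empty ranges, which never occur since Act(s) ≠ ∅) *)
Definition opt_id (o : opt) : ninf :=
  match o with Omin => None | Omax => Some 0%N end.

Local Open Scope ring_scope.
Record mdp (R : realFieldType) (S A : finType) := MDP {
  P : S -> A -> S -> R;
  P_ge0 : forall s a s', 0 <= P s a s';
  P_le1 : forall s a s', P s a s' <= 1;
  P_sum01 : forall s a, (\sum_(s' : S) P s a s' = 0) \/ (\sum_(s' : S) P s a s' = 1);
  Act_nonempty : forall s, exists a, \sum_(s' : S) P s a s' = 1
}.

Section Ops.
Variables (R : realFieldType) (S A : finType) (M : mdp R S A).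

Definition Act (s : S) : {set A} := [set a | \sum_(s' : S) P M s a s' == 1].

Definition Post (s : S) (a : A) : {set S} := [set s' | 0 < P M s a s'].

Definition Dtilde (T : {set S}) (o : opt) (r : S -> ninf) (s : S) : ninf :=
  if s \in T then ninf_inf
  else \big[opt_op o / opt_id o]_(a in Act s)
         ninf_addn (\big[ninf_min / ninf_inf]_(s' in Post s a) r s')
                   [exists u in Post s a, exists v in Post s a, r u != r v].

End Ops.

(* Monotonicity of opt and of addition reduces the claim to one action a:
   with X = Post(s,a), show min_X r1 + [r1 nonconstant on X] <= min_X r2 +
   [r2 nonconstant on X].  Only the case where r2 is constant on X, with value
   c, while r1 is not needs an argument: r1 then takes two distinct values
   below c, so one of them, and hence min_X r1, is strictly below c. *)

From HB Require Import structures.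
From mathcomp Require Import all_boot all_order all_algebra.
From mathcomp Require Import zify.

Lemma ninf_le_refl x : ninf_le x x.
Proof. by case: x => //= n. Qed.

Lemma ninf_le_trans y x z : ninf_le x y -> ninf_le y z -> ninf_le x z.
Proof. by case: x; case: y; case: z => //= *; lia. Qed.

Lemma ninf_le_min x y z : ninf_le x (ninf_min y z) = ninf_le x y && ninf_le x z.
Proof. by case: x; case: y; case: z => //= *; rewrite ?andbT // leq_min. Qed.

Lemma ninf_minA : associative ninf_min.
Proof. by case=> [?|] [?|] [?|] //=; rewrite minnA. Qed.

Lemma ninf_minC : commutative ninf_min.
Proof. by case=> [?|] [?|] //=; rewrite minnC. Qed.

Lemma ninf_min_infl : left_id ninf_inf ninf_min.
Proof. by []. Qed.

HB.instance Definition _ :=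
  Monoid.isComLaw.Build ninf ninf_inf ninf_min ninf_minA ninf_minC ninf_min_infl.

Lemma ninf_min_lel x y : ninf_le (ninf_min x y) x.
Proof. by case: x; case: y => //= *; lia. Qed.

Lemma ninf_le_min2 x1 x2 y1 y2 :
  ninf_le x1 x2 -> ninf_le y1 y2 -> ninf_le (ninf_min x1 y1) (ninf_min x2 y2).
Proof. by case: x1; case: x2; case: y1; case: y2 => //= *; lia. Qed.

Lemma ninf_le_max2 x1 x2 y1 y2 :
  ninf_le x1 x2 -> ninf_le y1 y2 -> ninf_le (ninf_max x1 y1) (ninf_max x2 y2).
Proof. by case: x1; case: x2; case: y1; case: y2 => //= *; lia. Qed.

Lemma opt_op_le2 o x1 x2 y1 y2 :
  ninf_le x1 x2 -> ninf_le y1 y2 -> ninf_le (opt_op o x1 y1) (opt_op o x2 y2).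
Proof. by case: o; [exact: ninf_le_min2 | exact: ninf_le_max2]. Qed.

Lemma ninf_addn0 x : ninf_addn x 0 = x.
Proof. by case: x => //= n; rewrite addn0. Qed.

Lemma ninf_le_addn2 x y m n :
  ninf_le x y -> (m <= n)%N -> ninf_le (ninf_addn x m) (ninf_addn y n).
Proof. by case: x; case: y => //= *; lia. Qed.

Section MinOverSet.
Variables (S : finType) (X : {set S}).

Local Notation bigmin f := (\big[ninf_min/ninf_inf]_(y in X) f y).
Local Notation nonconst f := [exists u in X, exists v in X, f u != f v].

Lemma ninf_bigmin_le (f : S -> ninf) {x} : x \in X -> ninf_le (bigmin f) (f x).
Proof. by move=> Xx; rewrite (bigD1 x) //=; exact: ninf_min_lel. Qed.

Lemma ninf_le_bigmin c (f : S -> ninf) :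
  (forall y, y \in X -> ninf_le c (f y)) -> ninf_le c (bigmin f).
Proof.
move=> cf; apply: (big_ind (ninf_le c)) => [|x y|y /cf] //.
  by case: c {cf}.
by rewrite ninf_le_min => -> ->.
Qed.

Lemma ninf_le_bigmin2 {f g : S -> ninf} :
  (forall s, ninf_le (f s) (g s)) -> ninf_le (bigmin f) (bigmin g).
Proof.
by move=> fg; apply: (big_ind2 ninf_le) => // *; exact: ninf_le_min2.
Qed.

Lemma ninf_bigmin_lt_of_neq {f : S -> ninf} {c u v} :
  u \in X -> v \in X -> f u != f v ->
  (forall y, y \in X -> ninf_le (f y) c) ->
  ninf_le (ninf_addn (bigmin f) 1) c.
Proof.
move=> Xu Xv fuv; case: c => [c|] fc; last by case: (bigmin f).
move: (fc u Xu) (fc v Xv) (ninf_bigmin_le f Xu) (ninf_bigmin_le f Xv) fuv.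
case: (f u) => [ju|] //; case: (f v) => [jv|] //; case: (bigmin f) => [m|] //=.
move=> ? ? ? ? neq; have : ju != jv by apply: contraNneq neq => ->.
lia.
Qed.

Lemma ninf_le_bigmin_addn_nonconst (f g : S -> ninf) :
  (forall s, ninf_le (f s) (g s)) ->
  ninf_le (ninf_addn (bigmin f) (nonconst f)) (ninf_addn (bigmin g) (nonconst g)).
Proof.
move=> fg; have fg_min := ninf_le_bigmin2 fg.
case: (boolP (nonconst g)) => [_|g_const].
  by apply: ninf_le_addn2 => //; exact: leq_b1.
case: (boolP (nonconst f)) => [|_]; last exact: ninf_le_addn2.
case/existsP=> u /andP[Xu /existsP[v /andP[Xv fuv]]].
have gE y : y \in X -> g y = g u.
  move=> Xy; apply/eqP; apply: contraNT g_const => gyu.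
  by apply/existsP; exists y; rewrite Xy; apply/existsP; exists u; rewrite Xu.
rewrite /= ninf_addn0; apply: (ninf_le_trans (g u)).
  by apply: (ninf_bigmin_lt_of_neq Xu Xv fuv) => y Xy; rewrite -(gE y Xy).
by apply: ninf_le_bigmin => y Xy; rewrite (gE y Xy) ninf_le_refl.
Qed.

End MinOverSet.

Theorem lemma8 (R : realFieldType) (S A : finType) (M : mdp R S A)
  (T : {set S}) (o : opt) (r1 r2 : S -> ninf) :
  (forall s, ninf_le (r1 s) (r2 s)) ->
  forall s, ninf_le (Dtilde M T o r1 s) (Dtilde M T o r2 s).
Proof.
move=> r12 s; rewrite /Dtilde; case: ifP => // _.
apply: (big_ind2 ninf_le) => [|x1 x2 y1 y2|a _].
- by case: o.
- exact: opt_op_le2.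
- exact: ninf_le_bigmin_addn_nonconst.
Qed.
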